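(* Let $a\ge7$ be an odd integer and $M_a=(4,6,a,a+2)$. Then $$I_{M_a}=\mathrm{rad}\big(x_2^{a-2}-x_1^{a-4}x_4^2,\;x_3^{a-2}-x_1^2x_4^{a-4},\;x_1x_4-x_2x_3,\;x_1^{a+2}-x_4^4,\;x_4^2-x_1x_3^2\big)$$ in $K[x_1,x_2,x_3,x_4]$, for any field $K$.
   Context: For a $1\times n$ integer row matrix $M=(a_1,\dots,a_n)$ (positive entries), the toric ideal $I_M\subseteq K[x_1,\dots,x_n]$ is the kernel of $K[x_1,\dots,x_n]\to K[t]$, $x_i\mapsto t^{a_i}$ (the ideal of the monomial curve $(t^{a_1},\dots,t^{a_n})$). *)

From HB Require Import structures.
From mathcomp Require Import all_boot all_order all_algebra.
From mathcomp Require Import multinomials.mpoly.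
Set Implicit Arguments. Unset Strict Implicit. Unset Printing Implicit Defensive.
Import GRing.Theory.
Local Open Scope ring_scope.

Definition toric_ideal (K : fieldType) (n : nat) (w : 'I_n -> nat)
  (p : {mpoly K[n]}) : Prop :=
  mmap (@polyC K) (fun i => 'X^(w i)) p = 0.

Definition ideal_gen (R : comRingType) (gs : seq R) (f : R) : Prop :=
  exists cs : seq R, f = \sum_(i < size gs) cs`_i * gs`_i.

Definition rad_gen (R : comRingType) (gs : seq R) (f : R) : Prop :=
  exists k : nat, ideal_gen gs (f ^+ k).

Definition Ma (a : nat) : 'I_4 -> nat :=
  fun i => nth 0%N [:: 4; 6; a; a.+2]%N i.

(* Let J be the ideal of the five binomials and phi : x_i |-> t^(M_a)_i.  Its
   generators lie in ker phi, which is prime, so rad J is contained in ker phi.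
   Conversely, in the saturation J : x1^oo one has x2^2 = x1^3,
   x3^2 = x1^((a+1)/2) x2 and x1 x4 = x2 x3, so after multiplication by a power of
   x1 every polynomial becomes q0(x1) + q1(x1) x2 + q2(x1) x3 + q3(x1) x2 x3.  The
   images of these summands have t-exponents in distinct residue classes mod 4,
   hence a kernel element p satisfies x1^N p in J for some N.  Finally p has no
   constant term and every variable is nilpotent modulo J + (x1^N), so
   p^(k+1) lies in p J + p x1^N K[x], which is contained in J. *)

From HB Require Import structures.
From mathcomp Require Import all_boot all_order all_algebra.
From mathcomp Require Import multinomials.mpoly.
From mathcomp Require Import zify ring.
Set Implicit Arguments.
Unset Strict Implicit.
Unset Printing Implicit Defensive.
Import GRing.Theory.
Local Open Scope ring_scope.

Section IdealGen.
Variables (R : comNzRingType) (gs : seq R).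

Lemma ideal_genP f :
  ideal_gen gs f <-> exists c : 'I_(size gs) -> R, f = \sum_i c i * gs`_i.
Proof.
split=> [[cs ->]|[c ->]]; first by exists (fun i => cs`_i).
exists (mkseq (fun i => if insub i is Some j then c j else 0) (size gs)).
by apply: eq_bigr => i _; rewrite nth_mkseq // valK.
Qed.

Lemma ideal_gen0 : ideal_gen gs 0.
Proof. by apply/ideal_genP; exists (fun _ => 0); rewrite big1 // => i _; rewrite mul0r. Qed.

Lemma ideal_genD f g : ideal_gen gs f -> ideal_gen gs g -> ideal_gen gs (f + g).
Proof.
move=> /ideal_genP[c ->] /ideal_genP[e ->]; apply/ideal_genP; exists (fun i => c i + e i).
by rewrite -big_split; apply: eq_bigr => i _; rewrite mulrDl.
Qed.

Lemma ideal_genMl h f : ideal_gen gs f -> ideal_gen gs (h * f).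
Proof.
move=> /ideal_genP[c ->]; apply/ideal_genP; exists (fun i => h * c i).
by rewrite mulr_sumr; apply: eq_bigr => i _; rewrite mulrA.
Qed.

Lemma ideal_genMr h f : ideal_gen gs f -> ideal_gen gs (f * h).
Proof. by rewrite mulrC; apply: ideal_genMl. Qed.

Lemma ideal_genB f g : ideal_gen gs f -> ideal_gen gs g -> ideal_gen gs (f - g).
Proof. by move=> If Ig; rewrite -mulN1r; apply: ideal_genD => //; apply: ideal_genMl. Qed.

Lemma ideal_gen_sum (I : Type) (r : seq I) (P : pred I) (F : I -> R) :
  (forall i, P i -> ideal_gen gs (F i)) -> ideal_gen gs (\sum_(i <- r | P i) F i).
Proof. by move=> IF; apply: big_ind => //; [exact: ideal_gen0 | exact: ideal_genD]. Qed.

Lemma ideal_gen_nth i : (i < size gs)%N -> ideal_gen gs gs`_i.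
Proof.
move=> lt_i; apply/ideal_genP; exists (fun j => (nat_of_ord j == i)%:R).
rewrite (bigD1 (Ordinal lt_i)) //= eqxx mul1r big1 ?addr0 // => j /negPf nji.
by rewrite -val_eqE /= in nji; rewrite nji mul0r.
Qed.

Lemma ideal_gen_mem g : g \in gs -> ideal_gen gs g.
Proof. by move=> gs_g; rewrite -(nth_index 0 gs_g); apply: ideal_gen_nth; rewrite index_mem. Qed.

End IdealGen.

Lemma ideal_gen_cons (R : comNzRingType) (gs : seq R) h f :
  ideal_gen (h :: gs) f <-> exists c j, ideal_gen gs j /\ f = c * h + j.
Proof.
split=> [/ideal_genP[c ->]|[c [j [/ideal_genP[e ->] ->]]]].
  rewrite big_ord_recl /=; exists (c ord0), (\sum_(i < size gs) c (lift ord0 i) * gs`_i).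
  by split=> //; apply/ideal_genP; exists (fun i => c (lift ord0 i)).
apply/ideal_genP; exists (fun i : 'I_(size gs).+1 =>
  if unlift ord0 i is Some k then e k else c).
by rewrite big_ord_recl unlift_none; congr (_ + _); apply: eq_bigr => i _; rewrite liftK.
Qed.

Section Radical.
Variables (R : comNzRingType) (gs : seq R).

Lemma rad_gen_ideal f : ideal_gen gs f -> rad_gen gs f.
Proof. by exists 1%N; rewrite expr1. Qed.

Lemma rad_genMl h f : rad_gen gs f -> rad_gen gs (h * f).
Proof. by move=> [k If]; exists k; rewrite exprMn; apply: ideal_genMl. Qed.

Lemma rad_gen_expK f k : rad_gen gs (f ^+ k) -> rad_gen gs f.
Proof. by move=> [m Ifk]; exists (k * m)%N; rewrite exprM. Qed.

Lemma rad_genD f g : rad_gen gs f -> rad_gen gs g -> rad_gen gs (f + g).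
Proof.
move=> [m If] [n Ig]; exists (m + n)%N; rewrite exprDn.
apply: ideal_gen_sum => i _; rewrite -mulr_natl; apply: ideal_genMl.
have [le_ni|lt_in] := leqP n i.
  have -> : g ^+ i = g ^+ (i - n) * g ^+ n by rewrite -exprD subnK.
  by rewrite mulrA; apply: ideal_genMl.
have -> : (m + n - i = (n - i) + m)%N by lia.
by rewrite exprD mulrAC; apply: ideal_genMl.
Qed.

Lemma rad_gen_ideal_sub hs f :
  ideal_gen hs f -> {in hs, forall g, rad_gen gs g} -> rad_gen gs f.
Proof.
move=> /ideal_genP[c ->] hs_rad; apply: big_ind => //.
- exact/rad_gen_ideal/ideal_gen0.
- exact: rad_genD.
by move=> i _; apply/rad_genMl/hs_rad/mem_nth.
Qed.

Lemma rad_gen_drop_cons h f :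
  ideal_gen gs (h * f) -> rad_gen (h :: gs) f -> rad_gen gs f.
Proof.
move=> Ihf [k /ideal_gen_cons[c [j [Ij Efk]]]]; exists k.+1.
rewrite exprS Efk (_ : f * (c * h + j) = c * (h * f) + f * j); last by ring.
by apply: ideal_genD; apply: ideal_genMl.
Qed.

End Radical.

Section Saturation.
Variables (R : comNzRingType) (gs : seq R) (x : R).

Definition saturation f := exists N, ideal_gen gs (x ^+ N * f).

Definition sat_eq f g := saturation (f - g).

Lemma saturation_ideal f : ideal_gen gs f -> saturation f.
Proof. by exists 0%N; rewrite mul1r. Qed.

Lemma saturationD f g : saturation f -> saturation g -> saturation (f + g).
Proof.
move=> [m If] [n Ig]; exists (m + n)%N; rewrite exprD mulrDr; apply: ideal_genD.
  by rewrite mulrAC mulrC; apply: ideal_genMl.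
by rewrite -mulrA; apply: ideal_genMl.
Qed.

Lemma saturationMl h f : saturation f -> saturation (h * f).
Proof. by move=> [m If]; exists m; rewrite mulrCA; apply: ideal_genMl. Qed.

Lemma saturationB f g : saturation f -> saturation g -> saturation (f - g).
Proof. by move=> Sf Sg; rewrite -mulN1r; apply: saturationD => //; apply: saturationMl. Qed.

Lemma saturation_cancel k f : saturation (x ^+ k * f) -> saturation f.
Proof. by move=> [m If]; exists (m + k)%N; rewrite exprD -mulrA. Qed.

Lemma sat_eq_refl f : sat_eq f f.
Proof. by rewrite /sat_eq subrr; apply/saturation_ideal/ideal_gen0. Qed.

Lemma sat_eq_trans g f h : sat_eq f g -> sat_eq g h -> sat_eq f h.
Proof. by move=> Sfg Sgh; rewrite /sat_eq -(subrKA g); apply: saturationD. Qed.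

Lemma sat_eqD f g h k : sat_eq f g -> sat_eq h k -> sat_eq (f + h) (g + k).
Proof. by move=> Sfg Shk; rewrite /sat_eq opprD addrACA; apply: saturationD. Qed.

Lemma sat_eqM f g h k : sat_eq f g -> sat_eq h k -> sat_eq (f * h) (g * k).
Proof.
move=> Sfg Shk; rewrite /sat_eq (_ : f * h - g * k = h * (f - g) + g * (h - k)); last by ring.
by apply: saturationD; apply: saturationMl.
Qed.

Lemma sat_eqMl h f g : sat_eq f g -> sat_eq (h * f) (h * g).
Proof. exact/sat_eqM/sat_eq_refl. Qed.

Lemma sat_eqX f g k : sat_eq f g -> sat_eq (f ^+ k) (g ^+ k).
Proof.
move=> Sfg; elim: k => [|k IHk]; first exact: sat_eq_refl.
by rewrite !exprS; apply: sat_eqM.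
Qed.

End Saturation.

Lemma mpolyX4_cases (R : nzRingType) (P : {mpoly R[4]} -> Prop) :
  P 'X_(inord 0) -> P 'X_(inord 1) -> P 'X_(inord 2) -> P 'X_(inord 3) ->
  forall i, P 'X_i.
Proof.
move=> P0 P1 P2 P3 i; rewrite -(inord_val i).
by case: i => [[|[|[|[|k]]]] ] //=.
Qed.

Lemma mpoly_sub_const_vars (R : comNzRingType) n (p : {mpoly R[n]}) :
  exists c, ideal_gen [seq 'X_i | i <- enum 'I_n] (p - c%:MP).
Proof.
set vars := [seq 'X_i | i <- enum 'I_n].
pose P q := exists c, ideal_gen vars (q - c%:MP).
have PC c : P c%:MP by exists c; rewrite subrr; apply: ideal_gen0.
have PD q r : P q -> P r -> P (q + r).
  move=> [c Iq] [e Ir]; exists (c + e); rewrite mpolyCD.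
  by rewrite (_ : _ - _ = (q - c%:MP) + (r - e%:MP)); [apply: ideal_genD | ring].
have PM q r : P q -> P r -> P (q * r).
  move=> [c Iq] [e Ir]; exists (c * e); rewrite mpolyCM.
  rewrite (_ : _ - _ = (q - c%:MP) * r + c%:MP * (r - e%:MP)); last by ring.
  by apply: ideal_genD; [apply: ideal_genMr | apply: ideal_genMl].
have PX i : P 'X_i by exists 0; rewrite mpolyC0 subr0; apply/ideal_gen_mem/map_f/mem_enum.
elim/mpolyind: p => [|c m p _ _ Pp]; first by rewrite -mpolyC0; apply: PC.
apply: PD => //; rewrite -mul_mpolyC mpolyXE_id; apply: (PM); first exact: PC.
apply: big_ind => [|q r|i _]; [by rewrite -mpolyC1; apply: PC | exact: PM |].
elim: (m i) => [|k IHk]; first by rewrite expr0 -mpolyC1; apply: PC.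
by rewrite exprS; apply: (PM).
Qed.

Section MonomialCurve.
Variables (K : fieldType) (a : nat).

Local Notation x1 := ('X_(inord 0) : {mpoly K[4]}).
Local Notation x2 := ('X_(inord 1) : {mpoly K[4]}).
Local Notation x3 := ('X_(inord 2) : {mpoly K[4]}).
Local Notation x4 := ('X_(inord 3) : {mpoly K[4]}).

Definition Ma_gens : seq {mpoly K[4]} :=
  [:: x2 ^+ (a - 2) - x1 ^+ (a - 4) * x4 ^+ 2;
      x3 ^+ (a - 2) - x1 ^+ 2 * x4 ^+ (a - 4);
      x1 * x4 - x2 * x3;
      x1 ^+ (a + 2) - x4 ^+ 4;
      x4 ^+ 2 - x1 * x3 ^+ 2].

Definition Ma_param : {rmorphism {mpoly K[4]} -> {poly K}} :=
  mmap (@polyC K) (fun i => 'X^(Ma a i)).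

Lemma Ma_param_var i : Ma_param 'X_i = 'X^(Ma a i).
Proof. by rewrite /= mmapX mmap1U. Qed.

Lemma Ma_param_gens g : (4 <= a)%N -> g \in Ma_gens -> Ma_param g = 0.
Proof.
move=> a_ge4; rewrite !inE => /or4P[| | |/orP[]] /eqP ->;
  rewrite rmorphB !rmorphM ?rmorphXn !Ma_param_var /Ma !inordK //= -?exprM -!exprD;
  apply/eqP; rewrite subr_eq0; apply/eqP; congr (_ ^+ _); nia.
Qed.

Lemma Ma_param_ideal f : (4 <= a)%N -> ideal_gen Ma_gens f -> Ma_param f = 0.
Proof.
move=> a_ge4 /ideal_genP[c ->]; rewrite rmorph_sum big1 // => i _.
by rewrite rmorphM (Ma_param_gens a_ge4 (mem_nth 0 (ltn_ord i))) mulr0.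
Qed.

Lemma Ma_param_saturation f :
  (4 <= a)%N -> saturation Ma_gens x1 f -> Ma_param f = 0.
Proof.
move=> a_ge4 [N /(Ma_param_ideal a_ge4)/eqP].
by rewrite rmorphM rmorphXn Ma_param_var mulf_eq0 !expf_eq0 polyX_eq0 !andbF => /eqP.
Qed.

Lemma Ma_param_rad f : (4 <= a)%N -> rad_gen Ma_gens f -> Ma_param f = 0.
Proof.
move=> a_ge4 [k /(Ma_param_ideal a_ge4)/eqP].
by rewrite rmorphXn expf_eq0 => /andP[_ /eqP].
Qed.

Lemma Ma_param_vars_coef0 f : (0 < a)%N ->
  ideal_gen [seq 'X_i | i <- enum 'I_4] f -> (Ma_param f)`_0 = 0.
Proof.
move=> a_gt0 /ideal_genP[c ->]; rewrite rmorph_sum coef_sum big1 // => i _.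
rewrite (nth_map ord0) -?(size_map (fun j => 'X_j : {mpoly K[4]})) //.
rewrite rmorphM Ma_param_var coefMXn /Ma.
by case: (nth ord0 _ _) => [[|[|[|[|k]]]] lt_k4] //=; rewrite ?a_gt0.
Qed.

Lemma x2_sq_sat : sat_eq Ma_gens x1 (x2 ^+ 2) (x1 ^+ 3).
Proof.
have Sx3 : saturation Ma_gens x1 (x1 ^+ a - x3 ^+ 4).
  apply: (saturation_cancel (k := 2)); apply: saturation_ideal.
  rewrite (_ : _ * _ = (x1 ^+ (a + 2) - x4 ^+ 4)
            + (x4 ^+ 2 + x1 * x3 ^+ 2) * (x4 ^+ 2 - x1 * x3 ^+ 2)); last by rewrite exprD; ring.
  apply: ideal_genD; first exact: (ideal_gen_nth (i := 3)).
  by apply: ideal_genMl; exact: (ideal_gen_nth (i := 4)).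
have Ix2x3 : ideal_gen Ma_gens (x3 ^+ 2 * (x2 ^+ 2 - x1 ^+ 3)).
  rewrite (_ : _ * _ = x1 ^+ 2 * (x4 ^+ 2 - x1 * x3 ^+ 2)
            - (x1 * x4 + x2 * x3) * (x1 * x4 - x2 * x3)); last by ring.
  by apply: ideal_genB; apply: ideal_genMl; [exact: (ideal_gen_nth (i := 4)) | exact: (ideal_gen_nth (i := 2))].
apply: (saturation_cancel (k := a)).
rewrite (_ : _ * _ = (x2 ^+ 2 - x1 ^+ 3) * (x1 ^+ a - x3 ^+ 4)
          + x3 ^+ 2 * (x3 ^+ 2 * (x2 ^+ 2 - x1 ^+ 3))); last by ring.
by apply: saturationD; apply: saturationMl; last apply: saturation_ideal.
Qed.

End MonomialCurve.

Section OddWeight.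
Variables (K : fieldType) (d : nat).

Local Notation a := (d.*2 + 7)%N.
Local Notation J := (Ma_gens K a).
Local Notation x1 := ('X_(inord 0) : {mpoly K[4]}).
Local Notation x2 := ('X_(inord 1) : {mpoly K[4]}).
Local Notation x3 := ('X_(inord 2) : {mpoly K[4]}).
Local Notation x4 := ('X_(inord 3) : {mpoly K[4]}).

Let a_ge4 : (4 <= a)%N. Proof. lia. Qed.

(* Modulo the saturation, x1^(a-3) x3^2 = x1^(a-4) x4^2 = x2^(a-2) = x2 (x2^2)^(d+2)
   = x1^(3d+6) x2, and x1^(a-3) = x1^(2d+4) can be cancelled. *)
Lemma x3_sq_sat : sat_eq J x1 (x3 ^+ 2) (x1 ^+ (d + 2) * x2).
Proof.
apply: (saturation_cancel (k := (d.*2 + 4))).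
have gen1 : ideal_gen J (x2 ^+ (a - 2) - x1 ^+ (a - 4) * x4 ^+ 2).
  exact: (ideal_gen_nth (i := 0)).
have gen5 : ideal_gen J (x4 ^+ 2 - x1 * x3 ^+ 2).
  exact: (ideal_gen_nth (i := 4)).
have := sat_eqX (d + 2) (x2_sq_sat K a).
rewrite /sat_eq; move: gen1 gen5.
set y1 := x1 ^+ d; set y2 := x2 ^+ d.
have -> : x1 ^+ (d.*2 + 4) = y1 ^+ 2 * x1 ^+ 4 by rewrite -exprM -exprD; congr (_ ^+ _); lia.
have -> : x1 ^+ (d + 2) = y1 * x1 ^+ 2 by rewrite -exprD.
have -> : (x2 ^+ 2) ^+ (d + 2) = y2 ^+ 2 * x2 ^+ 4 by rewrite -!exprM -exprD; congr (_ ^+ _); lia.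
have -> : (x1 ^+ 3) ^+ (d + 2) = y1 ^+ 3 * x1 ^+ 6 by rewrite -!exprM -exprD; congr (_ ^+ _); lia.
have -> : x2 ^+ (a - 2) = y2 ^+ 2 * x2 ^+ 5 by rewrite -exprM -exprD; congr (_ ^+ _); lia.
have -> : x1 ^+ (a - 4) = y1 ^+ 2 * x1 ^+ 3 by rewrite -exprM -exprD; congr (_ ^+ _); lia.
move=> gen1 gen5 Sx2.
have -> : y1 ^+ 2 * x1 ^+ 4 * (x3 ^+ 2 - y1 * x1 ^+ 2 * x2) =
    x2 * (y2 ^+ 2 * x2 ^+ 4 - y1 ^+ 3 * x1 ^+ 6)
    - ((y2 ^+ 2 * x2 ^+ 5 - y1 ^+ 2 * x1 ^+ 3 * x4 ^+ 2)
       + y1 ^+ 2 * x1 ^+ 3 * (x4 ^+ 2 - x1 * x3 ^+ 2)) by ring.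
apply: saturationB; first exact: saturationMl.
by apply/saturation_ideal/ideal_genD => //; apply: ideal_genMl.
Qed.

Definition at_x1 : {rmorphism {poly K} -> {mpoly K[4]}} :=
  horner_morph (fun c : K => mulrC x1 c%:MP).

Lemma at_x1X : at_x1 'X = x1.
Proof. exact: horner_morphX. Qed.

Lemma at_x1C c : at_x1 c%:P = c%:MP.
Proof. exact: horner_morphC. Qed.

Definition nf (q0 q1 q2 q3 : {poly K}) : {mpoly K[4]} :=
  at_x1 q0 + at_x1 q1 * x2 + at_x1 q2 * x3 + at_x1 q3 * (x2 * x3).

Definition has_nf p :=
  exists N q0 q1 q2 q3, sat_eq J x1 (x1 ^+ N * p) (nf q0 q1 q2 q3).

Lemma has_nf0 : has_nf 0.
Proof.
exists 0%N, 0, 0, 0, 0; rewrite /nf rmorph0 mulr0 !mul0r !addr0.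
exact: sat_eq_refl.
Qed.

Lemma has_nf1 : has_nf 1.
Proof.
exists 0%N, 1, 0, 0, 0; rewrite /nf rmorph0 rmorph1 mulr1 !mul0r !addr0.
exact: sat_eq_refl.
Qed.

Lemma has_nfD p q : has_nf p -> has_nf q -> has_nf (p + q).
Proof.
move=> [N [q0 [q1 [q2 [q3 Sp]]]]] [M [r0 [r1 [r2 [r3 Sq]]]]].
exists (N + M)%N, ('X^M * q0 + 'X^N * r0), ('X^M * q1 + 'X^N * r1),
  ('X^M * q2 + 'X^N * r2), ('X^M * q3 + 'X^N * r3).
rewrite (_ : nf _ _ _ _ = x1 ^+ M * nf q0 q1 q2 q3 + x1 ^+ N * nf r0 r1 r2 r3);
  last by rewrite /nf !rmorphD !rmorphM !rmorphXn /= at_x1X; ring.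
rewrite (_ : _ * _ = x1 ^+ M * (x1 ^+ N * p) + x1 ^+ N * (x1 ^+ M * q)); last by rewrite exprD; ring.
by apply: sat_eqD; apply: sat_eqMl.
Qed.

Lemma has_nfM_at_x1 r p : has_nf p -> has_nf (at_x1 r * p).
Proof.
move=> [N [q0 [q1 [q2 [q3 Sp]]]]].
exists N, (r * q0), (r * q1), (r * q2), (r * q3).
rewrite (_ : nf _ _ _ _ = at_x1 r * nf q0 q1 q2 q3); last by rewrite /nf !rmorphM; ring.
by rewrite mulrCA; apply: sat_eqMl.
Qed.

Lemma has_nfMx2 p : has_nf p -> has_nf (x2 * p).
Proof.
move=> [N [q0 [q1 [q2 [q3 Sp]]]]].
exists N, ('X^3 * q1), q0, ('X^3 * q3), q2; rewrite mulrCA.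
apply: sat_eq_trans (sat_eqMl x2 Sp) _; rewrite /sat_eq.
rewrite (_ : _ - _ = (at_x1 q1 + at_x1 q3 * x3) * (x2 ^+ 2 - x1 ^+ 3));
  last by rewrite /nf !rmorphM /= !at_x1X; ring.
by apply: saturationMl; apply: x2_sq_sat.
Qed.

Lemma has_nfMx3 p : has_nf p -> has_nf (x3 * p).
Proof.
move=> [N [q0 [q1 [q2 [q3 Sp]]]]].
exists N, ('X^(d + 2) * ('X^3 * q3)), ('X^(d + 2) * q2), q0, q1; rewrite mulrCA.
apply: sat_eq_trans (sat_eqMl x3 Sp) _; rewrite /sat_eq.
rewrite (_ : _ - _ = (at_x1 q2 + at_x1 q3 * x2) * (x3 ^+ 2 - x1 ^+ (d + 2) * x2)
                     + (at_x1 q3 * x1 ^+ (d + 2)) * (x2 ^+ 2 - x1 ^+ 3));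
  last by rewrite /nf !rmorphM !rmorphXn /= at_x1X; ring.
by apply: saturationD; apply: saturationMl; [apply: x3_sq_sat | apply: x2_sq_sat].
Qed.

Lemma has_nfMx4 p : has_nf p -> has_nf (x4 * p).
Proof.
move=> /has_nfMx3/has_nfMx2[N [q0 [q1 [q2 [q3 Sp]]]]].
exists N.+1, q0, q1, q2, q3; apply: sat_eq_trans Sp; rewrite /sat_eq.
rewrite (_ : _ - _ = (x1 ^+ N * p) * (x1 * x4 - x2 * x3)); last by rewrite exprS; ring.
by apply/saturationMl/saturation_ideal; exact: (ideal_gen_nth (i := 2)).
Qed.

Lemma has_nfMX i p : has_nf p -> has_nf ('X_i * p).
Proof.
move: i p; apply: (mpolyX4_cases (P := fun x => forall p, has_nf p -> has_nf (x * p))).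
- by move=> p; rewrite -at_x1X; apply: has_nfM_at_x1.
- exact: has_nfMx2.
- exact: has_nfMx3.
- exact: has_nfMx4.
Qed.

Lemma mpoly_has_nf p : has_nf p.
Proof.
elim/mpolyind: p => [|c m p _ _ nf_p]; first exact: has_nf0.
apply: has_nfD; last exact: nf_p.
rewrite -mul_mpolyC -at_x1C; apply: has_nfM_at_x1.
rewrite mpolyXE_id; elim: (index_enum _) => [|i r IHr]; first by rewrite big_nil; apply: has_nf1.
rewrite big_cons; elim: (m i) => [|k IHk]; first by rewrite expr0 mul1r.
by rewrite exprS -mulrA; apply: has_nfMX.
Qed.

Lemma Ma_param_at_x1 q : Ma_param K a (at_x1 q) = q \Po 'X^4.
Proof.
rewrite /= /horner_morph -horner_map Ma_param_var /Ma inordK //= -map_poly_comp.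
by congr (_.[_]); apply: eq_map_poly => c /=; rewrite mmapC.
Qed.

(* The images of the four summands of [nf] have t-exponents in the residue classes
   0, 2, a and a + 2 modulo 4, which are distinct since a is odd. *)
Lemma Ma_param_nf_eq0 q0 q1 q2 q3 : Ma_param K a (nf q0 q1 q2 q3) = 0 ->
  [/\ q0 = 0, q1 = 0, q2 = 0 & q3 = 0].
Proof.
rewrite /nf !rmorphD !rmorphM !Ma_param_at_x1 !Ma_param_var /Ma !inordK //= -exprD.
set S := (X in X = 0) => nf0; have coef_nf n : S`_n = 0 by rewrite nf0 coef0.
suff coefs k : [/\ q0`_k = 0, q1`_k = 0, q2`_k = 0 & q3`_k = 0].
  by split; apply/polyP => k; rewrite coef0; case: (coefs k).
split; [apply: etrans _ (coef_nf (4 * k)%N) | apply: etrans _ (coef_nf (4 * k + 6)%N)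
       | apply: etrans _ (coef_nf (4 * k + a)%N) | apply: etrans _ (coef_nf (4 * k + (6 + a))%N)].
all: rewrite /S !coefD !coefMXn !coef_comp_poly_Xn //.
all: by repeat case: ifP => ?; rewrite ?addr0 ?add0r; try (exfalso; lia); f_equal; lia.
Qed.

Lemma saturation_ker_Ma_param p : Ma_param K a p = 0 -> saturation J x1 p.
Proof.
move=> p0; have [N [q0 [q1 [q2 [q3 Snf]]]]] := mpoly_has_nf p.
have /eqP := Ma_param_saturation a_ge4 Snf.
rewrite rmorphB rmorphM p0 mulr0 sub0r oppr_eq0 => /eqP/Ma_param_nf_eq0[q00 q10 q20 q30].
move: Snf; rewrite q00 q10 q20 q30 /sat_eq /nf rmorph0 !mul0r !addr0 subr0.
exact: saturation_cancel.
Qed.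

Lemma rad_gen_vars N :
  {in [seq 'X_i | i <- enum 'I_4], forall g, rad_gen (x1 ^+ N :: J) g}.
Proof.
have gen i : (i < 5)%N -> rad_gen (x1 ^+ N :: J) J`_i.
  by move=> lt_i5; apply/rad_gen_ideal/ideal_gen_mem; rewrite inE mem_nth ?orbT.
have r1 : rad_gen (x1 ^+ N :: J) x1.
  by apply: (rad_gen_expK (k := N)); apply/rad_gen_ideal/ideal_gen_mem/mem_head.
move=> _ /mapP[i _ ->]; move: i; apply: (mpolyX4_cases (P := rad_gen (x1 ^+ N :: J))).
- exact: r1.
- apply: (rad_gen_expK (k := (a - 2))).
  have x1_a4 : x1 ^+ (a - 4) = x1 ^+ (a - 5) * x1 by rewrite -exprSr; congr (_ ^+ _); lia.
  rewrite (_ : x2 ^+ (a - 2) = (x2 ^+ (a - 2) - x1 ^+ (a - 4) * x4 ^+ 2)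
                        + (x1 ^+ (a - 5) * x4 ^+ 2) * x1); last by rewrite x1_a4; ring.
  by apply: rad_genD; [exact: (gen 0%N) | apply: rad_genMl].
- apply: (rad_gen_expK (k := (a - 2))).
  rewrite (_ : x3 ^+ (a - 2) = (x3 ^+ (a - 2) - x1 ^+ 2 * x4 ^+ (a - 4))
                        + (x1 * x4 ^+ (a - 4)) * x1); last by ring.
  by apply: rad_genD; [exact: (gen 1%N) | apply: rad_genMl].
- apply: (rad_gen_expK (k := 4)).
  rewrite (_ : x4 ^+ 4 = - (x1 ^+ (a + 2) - x4 ^+ 4) + x1 ^+ (a + 1) * x1); last first.
    by rewrite (_ : (a + 2 = (a + 1).+1)%N) ?exprSr; [ring | lia].
  apply: rad_genD; last exact: rad_genMl.
  by rewrite -mulN1r; apply: rad_genMl; exact: (gen 3%N).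
Qed.

Lemma rad_gen_ker_Ma_param p : Ma_param K a p = 0 -> rad_gen J p.
Proof.
move=> p0; have [N INp] := saturation_ker_Ma_param p0.
apply: rad_gen_drop_cons INp _.
have [c Ipc] := mpoly_sub_const_vars p.
have c0 : c = 0.
  have := Ma_param_vars_coef0 (leq_trans (isT : 0 < 4)%N a_ge4) Ipc.
  by rewrite rmorphB p0 sub0r /= mmapC coefN coefC => /eqP; rewrite oppr_eq0 => /eqP.
move: Ipc; rewrite c0 mpolyC0 subr0 => Ip.
exact: rad_gen_ideal_sub Ip (rad_gen_vars N).
Qed.

End OddWeight.

Theorem mainTheorem7 (K : fieldType) (a : nat) (ha7 : (7 <= a)%N) (hodd : odd a) :
  let x1 : {mpoly K[4]} := 'X_(inord 0) in
  let x2 : {mpoly K[4]} := 'X_(inord 1) in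
  let x3 : {mpoly K[4]} := 'X_(inord 2) in
  let x4 : {mpoly K[4]} := 'X_(inord 3) in
  forall p : {mpoly K[4]},
    toric_ideal (Ma a) p <->
    rad_gen [:: x2 ^+ (a - 2) - x1 ^+ (a - 4) * x4 ^+ 2;
                x3 ^+ (a - 2) - x1 ^+ 2 * x4 ^+ (a - 4);
                x1 * x4 - x2 * x3;
                x1 ^+ (a + 2) - x4 ^+ 4;
                x4 ^+ 2 - x1 * x3 ^+ 2] p.
Proof.
move=> x1 x2 x3 x4 p.
change (Ma_param K a p = 0 <-> rad_gen (Ma_gens K a) p).
have [d ->] : exists d, a = (d.*2 + 7)%N.
  exists (a - 7)%N./2; rewrite -{1}(subnK ha7) -[(a - 7)%N in LHS]odd_double_half.
  by rewrite oddB // hodd.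
split; [exact: rad_gen_ker_Ma_param | apply: Ma_param_rad; lia].
Qed.
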